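(* Let $H$ be a finite group of odd order with $d(H)\le 1$. Then $\mathsf{GEN}(\mathbb{Z}_2^2\times H)=*1$.
   Context: For a finite group $G$, $\mathsf{GEN}(G)$ is the following impartial two-player game. A position is a set of elements selected so far; the starting position is $\emptyset$. From a position $P$ with $\langle P\rangle\neq G$, the player to move selects some $g\in G\setminus P$, producing the position $P\cup\{g\}$ (these are the options of $P$); a position $P$ with $\langle P\rangle = G$ has no options. The nim-number of a position is defined recursively by $\operatorname{nim}(P)=\operatorname{mex}\{\operatorname{nim}(Q): Q \text{ an option of } P\}$, where $\operatorname{mex}(A)$ is the least nonnegative integer not in $A$. We write $\mathsf{GEN}(G)=*n$ if $\operatorname{nim}(\emptyset)=n$. $d(G)$ denotes the minimum size of a generating set of $G$ (with $d(G)=0$ for trivial $G$); $\mathbb{Z}_2^2=\mathbb{Z}_2\times\mathbb{Z}_2$. *)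

From HB Require Import structures.
From mathcomp Require Import all_boot all_order all_fingroup all_algebra all_solvable.
Set Implicit Arguments. Unset Strict Implicit. Unset Printing Implicit Defensive.

Local Open Scope group_scope.

(* mex s = least natural number not occurring in s (it is always <= size s). *)
Definition mex (s : seq nat) : nat :=
  find (fun n => n \notin s) (iota 0 (size s).+1).

(* Positions are sets P; if <<P>> = G there are no options, otherwise the
   options are g |: P for g \notin P.  nimf is the nim-number computed with a
   fuel parameter; nim uses fuel #|gT|.+1, which exceeds the maximal length
   of any play from any position, so it computes the true nim-number. *)
Fixpoint nimf (gT : finGroupType) (n : nat) (P : {set gT}) : nat :=
  match n with
  | 0 => 0
  | n'.+1 =>
      if <<P>> == [set: gT] then 0
      else mex [seq nimf n' (g |: P) | g <- enum (~: P)]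
  end.

Definition nim (gT : finGroupType) (P : {set gT}) : nat := nimf #|gT|.+1 P.

(* GEN(G) = *n  iff  GEN_nim G = n *)
Definition GEN_nim (gT : finGroupType) : nat := nim (set0 : {set gT}).

Lemma dgen_ex (gT : finGroupType) (G : {group gT}) :
  exists n, [exists A : {set gT}, (#|A| == n) && (<<A>> == G)].
Proof.
exists #|G|; apply/existsP; exists (G : {set gT}).
by rewrite eqxx /= genGid eqxx.
Qed.

Definition dgen (gT : finGroupType) (G : {group gT}) : nat :=
  ex_minn (dgen_ex G).

From HB Require Import structures.
From mathcomp Require Import all_boot all_order all_fingroup all_algebra all_solvable.
Set Implicit Arguments. Unset Strict Implicit. Unset Printing Implicit Defensive.

(* Write V for the Klein group 'Z_2 * 'Z_2.  A non-generating position P of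
   GEN(V * H) has nim-number 0 or 1 if P lies in 1 * H (as #|P| is odd or
   even), and 2 or 1 otherwise.  From inside 1 * H no single move generates,
   because the V-components of P and the new element lie in a cyclic, hence
   proper, subgroup of V.  Once P contains some x with x.1 != 1, the move
   (w, h) with w \notin <[x.1]> and H = <[h]> generates: as #|H| is odd,
   (w, h) ^+ #|H|.+1 = (1, h).  When moreover #|P| is odd, <<P>> has even
   order (it contains x, whose order is even), so any move into <<P>> :\: P
   keeps the position non-generating.  Hence the formula satisfies the mex
   recursion, and the empty position gets 1. *)

Local Open Scope group_scope.

Lemma mex_eq (s : seq nat) m :
  (forall i, (i < m)%N -> i \in s) -> m \notin s -> mex s = m.
Proof.
move=> lt_m_s m_s.
have le_m_s : (m <= size s)%N.
  rewrite -[m in (m <= _)%N](size_iota 0); apply: uniq_leq_size (iota_uniq 0 m) _ => i.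
  by rewrite mem_iota add0n => /lt_m_s.
rewrite /mex; set r := iota 0 _; set p := fun n => n \notin s.
have nth_r i : (i <= size s)%N -> nth 0 r i = i by move=> le_i; rewrite nth_iota.
have has_r : has p r by apply/hasP; exists m; rewrite // mem_iota.
apply/eqP; rewrite eqn_leq; apply/andP; split; rewrite leqNgt; apply/negP.
- by move=> /(before_find 0); rewrite nth_r // /p m_s.
- move=> lt_find_m; have := nth_find 0 has_r.
  by rewrite nth_r /p ?lt_m_s // ltnW ?(leq_trans lt_find_m le_m_s).
Qed.

Lemma mex_options (T : finType) (f : {set T} -> nat) (P : {set T}) m :
  (forall i, (i < m)%N -> exists2 g, g \notin P & f (g |: P) = i) ->
  (forall g, g \notin P -> f (g |: P) != m) ->
  mex [seq f (g |: P) | g <- enum (~: P)] = m.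
Proof.
move=> below not_m; apply: mex_eq => [i /below [g gP <-]|].
  by apply: map_f; rewrite mem_enum inE.
by apply/negP => /mapP [g]; rewrite mem_enum inE => /not_m + m_g; rewrite -m_g eqxx.
Qed.

Lemma nim_eq (gT : finGroupType) (f : {set gT} -> nat) :
  (forall P, <<P>> = [set: gT] -> f P = 0%N) ->
  (forall P, <<P>> != [set: gT] ->
     mex [seq f (g |: P) | g <- enum (~: P)] = f P) ->
  forall P, nim P = f P.
Proof.
move=> f_gen f_mex P; rewrite /nim.
suff nimf_f k Q : (#|~: Q| < k)%N -> nimf k Q = f Q by rewrite nimf_f ?ltnS ?max_card.
elim: k Q => [//|k IHk] Q /=; rewrite ltnS => le_Q_k.
case: eqP => [/f_gen -> // | /eqP Q_nongen].
rewrite -f_mex //; congr mex; apply/eq_in_map => g; rewrite mem_enum inE => gQ.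
apply/IHk/leq_trans/le_Q_k; apply: proper_card.
by rewrite properC properUr // sub1set.
Qed.

Lemma nongen_option (gT : finGroupType) (P : {set gT}) :
  <<P>> != [set: gT] -> odd #|P| -> ~~ odd #|<<P>>| ->
  exists2 g, g \notin P & <<g |: P>> != [set: gT].
Proof.
move=> P_nongen odd_P even_genP.
have /subsetPn [g genP_g gP] : ~~ (<<P>> \subset P).
  apply: contraNN even_genP => sub_genP.
  by rewrite (_ : <<P>> = P) //; apply/eqP; rewrite eqEsubset sub_genP subset_gen.
exists g => //; suff -> : <<g |: P>> = <<P>> by [].
apply/eqP; rewrite eqEsubset (genS (subsetUr _ _)) andbT.
by rewrite gen_subG subUset sub1set genP_g subset_gen.
Qed.

Lemma dgen_le1_cyclic (gT : finGroupType) (G : {group gT}) : dgen G <= 1 -> cyclic G.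
Proof.
rewrite /dgen; case: ex_minnP => m /existsP [A /andP [/eqP card_A /eqP gen_A]] _.
rewrite leq_eqVlt ltnS leqn0 -card_A => /orP [/cards1P [a A_a] | /eqP/cards0_eq A0].
  by apply/cyclicP; exists a; rewrite -gen_A A_a.
by rewrite -gen_A A0 gen0 cyclic1.
Qed.

Section PairGroups.

Variables A B : finGroupType.

Lemma mulg_pair (a a' : A) (b b' : B) : (a, b) * (a', b') = (a * a', b * b').
Proof. by []. Qed.

Lemma invg_pair (a : A) (b : B) : (a, b)^-1 = (a^-1, b^-1).
Proof. by []. Qed.

Lemma expg_pair (y : A * B) k : y ^+ k = (y.1 ^+ k, y.2 ^+ k).
Proof. by case: y => a b; elim: k => // k IHk; rewrite !expgS IHk. Qed.

Lemma gen_fst_proper (K : {group A}) (P : {set A * B}) :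
  K :!=: [set: A] -> {in P, forall y, y.1 \in K} -> <<P>> != [set: A * B].
Proof.
move=> K_proper P_K; pose L := [set y : A * B | y.1 \in K].
have L_group : group_set L.
  by apply/group_setP; split=> [|y z]; rewrite !inE ?group1 //; apply: groupM.
have sub_genP : <<P>> \subset Group L_group.
  by rewrite gen_subG; apply/subsetP => y /P_K; rewrite inE.
apply: contraNN K_proper => /eqP genP; rewrite eqEsubset subsetT; apply/subsetP => a _.
by have := subsetP sub_genP (a, 1); rewrite genP !inE; apply.
Qed.

Lemma pair_subgroup_eqT (K : {group A * B}) (S : {set A}) :
  <<S>> = [set: A] -> (forall b, (1, b) \in K) ->
  (forall a, a \in S -> exists b, (a, b) \in K) -> K = [set: A * B] :> {set _}.
Proof.
move=> gen_S K_1B S_K; pose L := [set a | (a, 1) \in K].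
have L_group : group_set L.
  apply/group_setP; split=> [|a a']; rewrite !inE ?group1 // => aK a'K.
  by have := groupM aK a'K; rewrite mulg_pair mulg1.
have sub_genS : <<S>> \subset Group L_group.
  rewrite gen_subG; apply/subsetP => a /S_K [b ab_K]; rewrite inE.
  have := groupM ab_K (groupVr (K_1B b)).
  by rewrite invg_pair mulg_pair mulgV invg1 mulg1.
apply/eqP; rewrite eqEsubset subsetT; apply/subsetP => -[a b] _.
have : a \in L by apply: (subsetP sub_genS); rewrite gen_S inE.
by rewrite inE => /groupM /(_ (K_1B b)); rewrite mulg_pair mulg1 mul1g.
Qed.

End PairGroups.

Local Notation V := ('Z_2 * 'Z_2)%type.

Lemma klein_mulgg (v : V) : v * v = 1.
Proof. by case: v => [[[|[|?]] ?] [[|[|?]] ?]]; apply/eqP. Qed.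

Lemma klein_expg (v : V) k : v ^+ k = v ^+ odd k.
Proof.
elim: k => // k IHk; rewrite expgS IHk /=.
by case: (odd k); rewrite ?mulg1 ?klein_mulgg.
Qed.

Lemma klein_cycle_proper (v : V) : <[v]> :!=: [set: V].
Proof.
have : #[v] <= 2 by apply: dvdn_leq; rewrite // order_dvdn expgS expg1 klein_mulgg.
by apply: contraTneq => vT; rewrite /order vT cardsT card_prod !card_ord.
Qed.

Lemma klein_elements (x w a : V) : x != 1 -> w != 1 -> w != x ->
  a \in [:: 1; x; w; x * w].
Proof.
by case: x w a => [[[|[|?]] ?] [[|[|?]] ?]] [[[|[|?]] ?] [[|[|?]] ?]]
  [[[|[|?]] ?] [[|[|?]] ?]].
Qed.

Lemma klein_gen (x w : V) : x != 1 -> w \notin <[x]> -> <<[set x; w]>> = [set: V].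
Proof.
move=> x1 w_x; apply/eqP; rewrite eqEsubset subsetT; apply/subsetP => a _.
have w1 : w != 1 by apply: contraNneq w_x => ->; apply: group1.
have wx : w != x by apply: contraNneq w_x => ->; apply: cycle_id.
have [x_gen w_gen] : x \in <<[set x; w]>> /\ w \in <<[set x; w]>>.
  by split; apply: mem_gen; rewrite !inE eqxx ?orbT.
by move: (klein_elements a x1 w1 wx); rewrite !inE => /or4P [] /eqP ->;
  rewrite ?group1 ?groupM.
Qed.

Lemma klein_pair_order_even (B : finGroupType) (x : V * B) : x.1 != 1 -> ~~ odd #[x].
Proof.
move=> x1; apply: contra x1 => odd_x.
by move: (expg_order x); rewrite expg_pair klein_expg odd_x expg1 => -[->].
Qed.

Section KleinTimesCyclic.

Variable H : finGroupType.

Local Notation G := (V * H)%type.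

Definition ker_fst : {set G} := [set y | y.1 == 1].

Definition nim_formula (P : {set G}) : nat :=
  if <<P>> == [set: G] then 0
  else if P \subset ker_fst then (if odd #|P| then 0 else 1)%N
  else (if odd #|P| then 2 else 1)%N.

Lemma card_ker_fst : #|ker_fst| = #|[set: H]|.
Proof.
have inj_1H : injective (fun b : H => ((1, b) : G)) by move=> b b' [].
rewrite -(card_imset _ inj_1H); apply: eq_card => -[a b].
rewrite !inE /=; apply/eqP/imsetP => [-> | [c _ [-> _]] //].
by exists b.
Qed.

Lemma nongen_setU1_ker_fst (P : {set G}) g :
  P \subset ker_fst -> <<g |: P>> != [set: G].
Proof.
move=> P_ker; apply: (gen_fst_proper (klein_cycle_proper g.1)) => y.
rewrite in_setU1 => /predU1P [-> | /(subsetP P_ker)]; first exact: cycle_id.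
by rewrite inE => /eqP ->; apply: group1.
Qed.

Lemma nim_formula_set0 : nim_formula set0 = 1%N.
Proof.
have set0_nongen : <<set0>> != [set: G].
  by apply: (gen_fst_proper (klein_cycle_proper 1)) => y; rewrite inE.
by rewrite /nim_formula (negbTE set0_nongen) sub0set cards0.
Qed.

Variable h : H.
Hypotheses (H_odd : odd #|[set: H]|) (H_gen : [set: H] = <[h]>).

Lemma gen_option (P : {set G}) x : <<P>> != [set: G] -> x \in P -> x.1 != 1 ->
  exists2 g, g \notin P & <<g |: P>> = [set: G].
Proof.
move=> P_nongen Px x1.
have /subsetPn [w _ w_x] : ~~ ([set: V] \subset <[x.1]>).
  by rewrite subTset klein_cycle_proper.
pose g : G := (w, h); pose K := <<g |: P>>%G.
have Kg : g \in K by rewrite mem_gen ?setU11.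
have gen_g : <<g |: P>> = [set: G].
  apply: (pair_subgroup_eqT (K := K) (klein_gen x1 w_x)) => [b | a].
    have K1h : ((1, h) : G) \in K.
      have := groupX #|[set: H]|.+1 Kg; rewrite expg_pair klein_expg /= H_odd.
      by rewrite expgSr expg_cardG ?inE // mul1g.
    have : b \in <[h]> by rewrite -H_gen inE.
    by case/cycleP => i ->; have := groupX i K1h; rewrite expg_pair expg1n.
  rewrite !inE => /predU1P [-> | /eqP ->]; last by exists h.
  by exists x.2; rewrite -surjective_pairing mem_gen ?setU1r.
exists g => //; apply: contra P_nongen => Pg.
by rewrite -gen_g (setUidPr _) ?sub1set.
Qed.

Lemma nim_formula_mex_ker (P : {set G}) : P \subset ker_fst ->
  mex [seq nim_formula (g |: P) | g <- enum (~: P)] = nim_formula P.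
Proof.
move=> P_ker.
have P_nongen : <<P>> != [set: G].
  apply: contraNN (nongen_setU1_ker_fst 1 P_ker) => /eqP genP.
  by rewrite -subTset -genP genS ?subsetUr.
have option_value g : g \notin P -> nim_formula (g |: P) =
    (if odd #|P| then 1 else if g \in ker_fst then 0 else 2)%N.
  move=> gP; rewrite /nim_formula (negbTE (nongen_setU1_ker_fst g P_ker)).
  rewrite subUset sub1set P_ker andbT cardsU1 gP add1n /=.
  by case: (odd #|P|); case: (g \in ker_fst).
rewrite {2}/nim_formula (negbTE P_nongen) P_ker; case: ifP => odd_P.
  by apply: mex_options => // g gP; rewrite option_value // odd_P.
apply: mex_options => [i | g gP]; last by rewrite option_value // odd_P; case: ifP.
rewrite ltnS leqn0 => /eqP ->.
have /subsetPn [g g_ker gP] : ~~ (ker_fst \subset P).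
  apply: contraFN odd_P => ker_P.
  by rewrite (_ : P = ker_fst) ?card_ker_fst //; apply/eqP; rewrite eqEsubset P_ker.
by exists g; rewrite // option_value // odd_P g_ker.
Qed.

Lemma nim_formula_mex_notker (P : {set G}) :
  <<P>> != [set: G] -> ~~ (P \subset ker_fst) ->
  mex [seq nim_formula (g |: P) | g <- enum (~: P)] = nim_formula P.
Proof.
move=> P_nongen P_notker; have /subsetPn [x Px] := P_notker; rewrite inE => x1.
have option_value g : g \notin P -> nim_formula (g |: P) =
    (if <<g |: P>> == [set: G] then 0 else if odd #|P| then 1 else 2)%N.
  move=> gP; rewrite /nim_formula subUset (negbTE P_notker) andbF.
  by rewrite cardsU1 gP add1n /=; case: (odd #|P|).
rewrite {2}/nim_formula (negbTE P_nongen) (negbTE P_notker).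
have [g0 g0P gen_g0] := gen_option P_nongen Px x1.
have has_value0 : exists2 g, g \notin P & nim_formula (g |: P) = 0.
  by exists g0; rewrite // option_value // gen_g0 eqxx.
case: ifP => odd_P.
  apply: mex_options => [i | g gP]; last by rewrite option_value // odd_P; case: ifP.
  rewrite ltnS leq_eqVlt ltnS leqn0 => /orP [] /eqP -> //.
  have even_genP : ~~ odd #|<<P>>|.
    apply: contra (klein_pair_order_even x1); apply: dvdn_odd.
    exact: order_dvdG (mem_gen Px).
  have [g gP g_nongen] := nongen_option P_nongen odd_P even_genP.
  by exists g; rewrite // option_value // (negbTE g_nongen) odd_P.
apply: mex_options => [i | g gP]; last by rewrite option_value // odd_P; case: ifP.
by rewrite ltnS leqn0 => /eqP ->.
Qed.

Lemma nim_formula_mex (P : {set G}) : <<P>> != [set: G] ->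
  mex [seq nim_formula (g |: P) | g <- enum (~: P)] = nim_formula P.
Proof.
move=> P_nongen; have [P_ker | P_notker] := boolP (P \subset ker_fst).
  exact: nim_formula_mex_ker.
exact: nim_formula_mex_notker.
Qed.

End KleinTimesCyclic.

Local Close Scope group_scope.

Theorem proposition4p10 (H : finGroupType)
  (Hodd : odd #|[set: H]|) (Hd : dgen [set: H]%G <= 1) :
  GEN_nim ('Z_2 * 'Z_2 * H)%type = 1.
Proof.
have [h H_gen] := cyclicP (dgen_le1_cyclic Hd).
rewrite /GEN_nim (@nim_eq _ (@nim_formula H)).
- exact: nim_formula_set0.
- by move=> P genP; rewrite /nim_formula genP eqxx.
- exact: nim_formula_mex Hodd H_gen.
Qed.
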